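(* For every $\alpha\in[m,M]$, with $E_\alpha=\{x\in[s^{-1},1):\lambda(x)\le\alpha\}$, the function $x\mapsto \mathds{1}_{E_\alpha}(x)/x$ is Riemann integrable on $[s^{-1},1]$.
   Context: Fix integers $p\ge 3$ and $2\le s<p$, and a set $A\subset\{0,1,\dots,p-1\}$ with $\#A=s$. Let $h:\{0,1,\dots,s-1\}\to A$ be the unique strictly increasing bijection. For a positive integer $n$ with base-$s$ expansion $n=\sum_{i=0}^k\varepsilon_i s^i$ ($\varepsilon_i\in\{0,\dots,s-1\}$, $\varepsilon_k\ne 0$), put $a_n=\sum_{i=0}^k h(\varepsilon_i)p^i$, and put $a_0=h(0)$. Let $b_n=a_n/n^{\log_s p}$ for $n\ge1$, $m=\inf_{n\ge1}b_n$, $M=\sup_{n\ge1}b_n$. For real $x\ge0$ let $a(x)=a_{\lfloor x\rfloor}$, and for $x>0$ let $\lambda(x)=\lim_{k\to\infty}\frac{a(s^kx)}{(s^kx)^{\log_s p}}$ (this limit exists). $\mathds{1}_E$ denotes the indicator function of $E$ (extended by $0$ at $x=1$). *)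

From Stdlib Require Import Reals Lra Lia Arith List Sorted ClassicalEpsilon.
From Coquelicot Require Import Coquelicot.
Open Scope R_scope.

(* The digit set A is given as its strictly increasing enumeration (a list);
   then h(i) = i-th element of A is the unique increasing bijection {0..s-1} -> A. *)
Definition hdig (A : list nat) (i : nat) : nat := nth i A 0%nat.

(* a_n for n >= 1 via base-s digits (fuel-based recursion; fuel n suffices). *)
Fixpoint a_aux (s p : nat) (A : list nat) (fuel n : nat) : nat :=
  match fuel with
  | O => O
  | S f => if Nat.eqb n 0 then O
           else (hdig A (n mod s) + p * a_aux s p A f (n / s))%nat
  end.

Definition aseq (s p : nat) (A : list nat) (n : nat) : nat :=
  if Nat.eqb n 0 then hdig A 0 else a_aux s p A n n.

Definition logsp (s p : nat) : R := ln (INR p) / ln (INR s).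

Definition bseq (s p : nat) (A : list nat) (n : nat) : R :=
  INR (aseq s p A n) / Rpower (INR n) (logsp s p).

Definition bset (s p : nat) (A : list nat) (y : R) : Prop :=
  exists n : nat, (1 <= n)%nat /\ y = bseq s p A n.

Definition mInf (s p : nat) (A : list nat) : Rbar := Glb_Rbar (bset s p A).
Definition MSup (s p : nat) (A : list nat) : Rbar := Lub_Rbar (bset s p A).

Definition areal (s p : nat) (A : list nat) (x : R) : R :=
  INR (aseq s p A (Z.to_nat (Int_part x))).

Definition lambda (s p : nat) (A : list nat) (x : R) : R :=
  real (Lim_seq (fun k : nat =>
    areal s p A (INR s ^ k * x) / Rpower (INR s ^ k * x) (logsp s p))).

Definition E_alpha (s p : nat) (A : list nat) (alpha x : R) : Prop :=
  / INR s <= x < 1 /\ lambda s p A x <= alpha.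

Definition indic_over_x (s p : nat) (A : list nat) (alpha : R) (x : R) : R :=
  if excluded_middle_informative (E_alpha s p A alpha x) then / x else 0.

(* Let c = log_s p.  By self-similarity of (a_n), a_N lies in [p^m a_k, p^m (a_k + 1)) whenever
   N lies in the k-th block [k s^m, (k+1) s^m); hence on an s-adic interval I of level j the
   quantity lambda(x) x^c is confined to an interval [lo_I, lo_I + p^-j].  Therefore E_alpha is
   sandwiched on I between the two terminal segments of I where alpha x^c >= lo_I + p^-j,
   resp. alpha x^c >= lo_I.  As x^c grows at rate at least s/p on [1/s, 1], the left endpoints
   of these segments are at most p^(1-j) / (s alpha) apart, so over the fewer than s^j intervals
   of level j the resulting lower and upper bounds for 1_E(x)/x differ in integral by at most
   (p / alpha) (s/p)^j, which tends to 0 as s < p.  For alpha <= 0 the set E_alpha is empty,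
   because lambda > 0. *)

From Stdlib Require Import Reals List Sorted Lra Lia ClassicalEpsilon.
From Coquelicot Require Import Coquelicot.
Open Scope R_scope.

Lemma StepFun_RInt (a b : R) (phi : StepFun a b) :
  ex_RInt phi a b /\ RInt phi a b = RiemannInt_SF phi.
Proof.
  set (zero_SF := mkStepFun (StepFun_P4 a b 0)).
  assert (Hzero : forall eps : posreal,
    (forall t, Rmin a b <= t <= Rmax a b -> Rabs (phi t - phi t) <= zero_SF t) /\
    Rabs (RiemannInt_SF zero_SF) < eps).
  { intros eps. split.
    - intros t _. simpl. unfold fct_cte. rewrite Rminus_diag, Rabs_R0. lra.
    - unfold zero_SF. rewrite StepFun_P18, Rmult_0_l, Rabs_R0. apply cond_pos. }
  (* [phi] approximates itself with error bound zero, so its approximating sequence is constant. *)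
  unshelve epose (pr := _ : Riemann_integrable phi a b).
  { intros eps. exists phi, zero_SF. exact (Hzero eps). }
  split; [exact (ex_RInt_Reals_1 _ _ _ pr)|].
  rewrite (RInt_Reals _ _ _ pr). unfold RiemannInt.
  destruct (RiemannInt_exists pr RinvN RinvN_cv) as [l Hl].
  apply UL_sequence with (fun N => RiemannInt_SF (phi_sequence RinvN pr N)); [exact Hl|].
  intros e He. exists 0%nat. intros n _. unfold R_dist. simpl.
  rewrite Rminus_diag, Rabs_R0. exact He.
Qed.

Lemma RInt_le_plus (f g h : R -> R) (a b : R) : a <= b ->
  ex_RInt f a b -> ex_RInt g a b -> ex_RInt h a b ->
  (forall x, a < x < b -> f x <= g x + h x) -> RInt f a b <= RInt g a b + RInt h a b.
Proof.
  intros Hab If Ig Ih H.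
  rewrite <- (RInt_plus (V := R_CompleteNormedModule)) by assumption.
  apply RInt_le; auto. apply (ex_RInt_plus (V := R_NormedModule)); auto.
Qed.

Lemma ex_RInt_squeeze (f : R -> R) (a b : R) : a <= b ->
  (forall eps, 0 < eps -> exists l u : R -> R, ex_RInt l a b /\ ex_RInt u a b /\
     (forall x, a < x < b -> l x <= f x <= u x) /\ RInt u a b - RInt l a b < eps) ->
  ex_RInt f a b.
Proof.
  intros Hab Hsq. apply ex_RInt_Reals_1. intros eps.
  assert (He : 0 < eps / 5) by (generalize (cond_pos eps); lra).
  destruct (constructive_indefinite_description _ (Hsq _ He)) as [l0 Hl].
  destruct (constructive_indefinite_description _ Hl) as [u0 [Il0 [Iu0 [Hlu0 Hgap]]]].
  (* The step-function criterion needs the bounds on the closed interval: patch the endpoints. *)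
  set (patch (g : R -> R) x := if excluded_middle_informative (a < x < b) then g x else f x).
  assert (Hpatch : forall g x, Rmin a b < x < Rmax a b -> g x = patch g x).
  { intros g x Hx. rewrite Rmin_left, Rmax_right in Hx by lra. unfold patch.
    destruct excluded_middle_informative; tauto. }
  set (l := patch l0). set (u := patch u0).
  assert (Il : ex_RInt l a b) by (apply (ex_RInt_ext l0); auto).
  assert (Iu : ex_RInt u a b) by (apply (ex_RInt_ext u0); auto).
  rewrite (RInt_ext l0 l), (RInt_ext u0 u) in Hgap by auto.
  assert (Hlu : forall x, a <= x <= b -> l x <= f x <= u x).
  { intros x Hx. unfold l, u, patch. destruct excluded_middle_informative; auto. lra. }
  destruct (ex_RInt_Reals_0 _ _ _ Il (mkposreal _ He)) as [phl [psl [Hl1 Hl2]]].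
  destruct (ex_RInt_Reals_0 _ _ _ Iu (mkposreal _ He)) as [phu [psu [Hu1 Hu2]]].
  simpl in Hl2, Hu2. rewrite Rmin_left, Rmax_right in Hl1, Hu1 by lra.
  set (L := mkStepFun (StepFun_P28 (-1) phl psl)).
  set (U := mkStepFun (StepFun_P28 1 phu psu)).
  (* From [L <= l <= f <= u <= U], the step function [L] approximates [f] within [U - L]. *)
  exists L, (mkStepFun (StepFun_P28 (-1) U L)). rewrite Rmin_left, Rmax_right by lra. split.
  - intros t Ht. specialize (Hl1 t Ht). specialize (Hu1 t Ht). specialize (Hlu t Ht).
    apply Rabs_le_between in Hl1, Hu1. unfold L, U; simpl. apply Rabs_le_between. lra.
  - unfold L, U. rewrite !StepFun_P30.
    destruct (StepFun_RInt a b phl) as [Iphl <-]. destruct (StepFun_RInt a b psl) as [Ipsl Epsl].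
    destruct (StepFun_RInt a b phu) as [Iphu <-]. destruct (StepFun_RInt a b psu) as [Ipsu Epsu].
    rewrite <- Epsl, <- Epsu in *.
    assert (Wu := fun t Ht => proj1 (Rabs_le_between _ _) (Hu1 t Ht)).
    assert (Wl := fun t Ht => proj1 (Rabs_le_between _ _) (Hl1 t Ht)).
    assert (RInt phu a b <= RInt u a b + RInt psu a b).
    { apply RInt_le_plus; auto. intros x Hx. specialize (Wu x ltac:(lra)). lra. }
    assert (RInt u a b <= RInt phu a b + RInt psu a b).
    { apply RInt_le_plus; auto. intros x Hx. specialize (Wu x ltac:(lra)). lra. }
    assert (RInt phl a b <= RInt l a b + RInt psl a b).
    { apply RInt_le_plus; auto. intros x Hx. specialize (Wl x ltac:(lra)). lra. }
    assert (RInt l a b <= RInt phl a b + RInt psl a b).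
    { apply RInt_le_plus; auto. intros x Hx. specialize (Wl x ltac:(lra)). lra. }
    assert (RInt l a b <= RInt u a b).
    { apply RInt_le; auto. intros x Hx. specialize (Hlu x ltac:(lra)). lra. }
    apply Rabs_def2 in Hl2, Hu2. apply Rabs_def1; lra.
Qed.

Lemma ex_RInt_grid (f : R -> R) (x : nat -> R) (N : nat) :
  (forall i, (i < N)%nat -> ex_RInt f (x i) (x (S i))) -> ex_RInt f (x 0%nat) (x N).
Proof.
  induction N as [|N IH]; intros Hf; [apply ex_RInt_point|].
  apply (ex_RInt_Chasles (V := R_NormedModule)) with (x N); auto.
Qed.

Lemma RInt_grid_le (f : R -> R) (x : nat -> R) (N : nat) (beta : R) :
  (forall i, (i < N)%nat -> ex_RInt f (x i) (x (S i)) /\ RInt f (x i) (x (S i)) <= beta) ->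
  RInt f (x 0%nat) (x N) <= INR N * beta.
Proof.
  induction N as [|N IH]; intros Hf.
  - rewrite RInt_point. unfold zero; simpl. lra.
  - destruct (Hf N ltac:(lia)) as [IN HN].
    assert (I0 : ex_RInt f (x 0%nat) (x N)) by (apply ex_RInt_grid; intros; apply Hf; lia).
    rewrite <- (RInt_Chasles (V := R_CompleteNormedModule) f _ (x N)) by assumption.
    rewrite S_INR. specialize (IH ltac:(intros; apply Hf; lia)). simpl. unfold plus; simpl. lra.
Qed.

Lemma upset_threshold (S : R -> Prop) (u v : R) : u <= v ->
  (forall x y, u <= x <= y -> y <= v -> S x -> S y) ->
  exists t, u <= t <= v /\ (forall x, u <= x < t -> ~ S x) /\ (forall x, t < x <= v -> S x).
Proof.
  intros Huv Hup.
  set (T x := x = u \/ (u <= x <= v /\ ~ S x)).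
  destruct (completeness T) as [t [Hub Hlub]].
  - exists v. intros x [->|Hx]; lra.
  - exists u. now left.
  - assert (Hut : u <= t) by (apply Hub; now left).
    assert (Htv : t <= v) by (apply Hlub; intros x [->|Hx]; lra).
    exists t. split; [lra|split].
    + intros x Hx HSx. assert (t <= x); [|lra].
      apply Hlub. intros y [->|[Hy HnS]]; [lra|].
      destruct (Rle_lt_dec x y); [|lra]. exfalso. apply HnS, (Hup x y); auto; lra.
    + intros x Hx. destruct (classic (S x)) as [|HnS]; [assumption|].
      assert (x <= t) by (apply Hub; right; split; [lra|assumption]). lra.
Qed.

Definition restrict_superlevel (G : R -> R) (c : R) (g : R -> R) (x : R) : R :=
  if excluded_middle_informative (c <= G x) then g x else 0.

Lemma RInt_restrict_superlevel (G g : R -> R) (c u v t : R) : u <= t <= v ->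
  (forall x, u <= x < t -> ~ c <= G x) -> (forall x, t < x <= v -> c <= G x) ->
  ex_RInt g u v ->
  ex_RInt (restrict_superlevel G c g) u v /\ RInt (restrict_superlevel G c g) u v = RInt g t v.
Proof.
  intros Ht Hbelow Habove Ig.
  assert (E0 : forall x, Rmin u t < x < Rmax u t -> 0 = restrict_superlevel G c g x).
  { intros x Hx. rewrite Rmin_left, Rmax_right in Hx by lra. unfold restrict_superlevel.
    destruct excluded_middle_informative as [Hc|]; [|reflexivity]. exfalso; apply (Hbelow x); lra. }
  assert (Eg : forall x, Rmin t v < x < Rmax t v -> g x = restrict_superlevel G c g x).
  { intros x Hx. rewrite Rmin_left, Rmax_right in Hx by lra. unfold restrict_superlevel.
    destruct excluded_middle_informative as [|Hc]; [reflexivity|]. exfalso; apply Hc, Habove; lra. }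
  assert (Igt : ex_RInt g t v)
    by (apply (ex_RInt_Chasles_2 (V := R_CompleteNormedModule)) with u; auto).
  assert (I1 : ex_RInt (restrict_superlevel G c g) u t)
    by (apply (ex_RInt_ext (fun _ => 0)); [exact E0|apply ex_RInt_const]).
  assert (I2 : ex_RInt (restrict_superlevel G c g) t v) by (apply (ex_RInt_ext g); auto).
  split; [apply (ex_RInt_Chasles (V := R_NormedModule)) with t; auto|].
  rewrite <- (RInt_Chasles (V := R_CompleteNormedModule) _ u t v) by auto.
  rewrite <- (RInt_ext _ _ _ _ E0), <- (RInt_ext _ _ _ _ Eg), RInt_const.
  unfold plus, scal; simpl; unfold mult; simpl. ring.
Qed.

Lemma restrict_superlevel_gap (G g : R -> R) (u v delta B c1 c2 : R) :
  u <= v -> 0 < delta -> 0 <= B -> c1 <= c2 ->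
  (forall x y, u <= x <= y -> y <= v -> delta * (y - x) <= G y - G x) ->
  ex_RInt g u v -> (forall x, u < x < v -> g x <= B) ->
  ex_RInt (restrict_superlevel G c1 g) u v /\ ex_RInt (restrict_superlevel G c2 g) u v /\
  RInt (restrict_superlevel G c1 g) u v - RInt (restrict_superlevel G c2 g) u v <=
  B * (c2 - c1) / delta.
Proof.
  intros Huv Hd HB Hc HG Ig Hg.
  assert (Hup : forall c x y, u <= x <= y -> y <= v -> c <= G x -> c <= G y).
  { intros c x y Hxy Hy Hx. specialize (HG x y Hxy Hy). nra. }
  destruct (upset_threshold (fun x => c1 <= G x) u v Huv (Hup c1)) as [t1 [Ht1 [B1 A1]]].
  destruct (upset_threshold (fun x => c2 <= G x) u v Huv (Hup c2)) as [t2 [Ht2 [B2 A2]]].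
  destruct (RInt_restrict_superlevel G g c1 u v t1) as [I1 ->]; auto.
  destruct (RInt_restrict_superlevel G g c2 u v t2) as [I2 ->]; auto.
  assert (Ht12 : t1 <= t2).
  { destruct (Rle_lt_dec t1 t2) as [|Hlt]; [assumption|].
    exfalso. apply (B1 ((t1 + t2) / 2)); [lra|]. apply Rle_trans with c2; [lra|]. apply A2; lra. }
  (* Beyond [t1], [G] is at least [c1] and grows at rate [delta]; so it reaches [c2]
     within distance [(c2 - c1) / delta]. *)
  assert (Hwidth : t2 - t1 <= (c2 - c1) / delta).
  { apply Rnot_lt_le. intros Hlt.
    set (y := (t1 + (c2 - c1) / delta + t2) / 2). set (x := (t1 + y - (c2 - c1) / delta) / 2).
    assert (Hw : 0 <= (c2 - c1) / delta) by (apply Rdiv_le_0_compat; lra).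
    apply (B2 y); [unfold y; lra|].
    assert (Gx := A1 x ltac:(unfold x, y; lra)).
    assert (Gxy := HG x y ltac:(unfold x, y; lra) ltac:(unfold y; lra)).
    assert (delta * (y - x) > c2 - c1); [|lra].
    apply Rlt_gt. replace (c2 - c1) with (delta * ((c2 - c1) / delta)) by (field; lra).
    apply Rmult_lt_compat_l; [lra|]. unfold x, y. lra. }
  assert (Ig1 : ex_RInt g t1 v)
    by (apply (ex_RInt_Chasles_2 (V := R_CompleteNormedModule)) with u; [lra|assumption]).
  assert (Ig12 : ex_RInt g t1 t2)
    by (apply (ex_RInt_Chasles_1 (V := R_CompleteNormedModule)) with v; [lra|assumption]).
  assert (Ig2 : ex_RInt g t2 v)
    by (apply (ex_RInt_Chasles_2 (V := R_CompleteNormedModule)) with t1; [lra|assumption]).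
  split; [assumption|split; [assumption|]].
  rewrite <- (RInt_Chasles (V := R_CompleteNormedModule) g t1 t2 v) by assumption.
  unfold plus; simpl.
  assert (RInt g t1 t2 <= RInt (fun _ => B) t1 t2).
  { apply RInt_le; auto; [apply ex_RInt_const|]. intros x Hx. apply Hg. lra. }
  rewrite RInt_const in H. unfold scal in H; simpl in H; unfold mult in H; simpl in H.
  apply Rle_trans with (B * (t2 - t1)); [lra|].
  unfold Rdiv. rewrite Rmult_assoc. apply Rmult_le_compat_l; lra.
Qed.

Definition nfloor (y : R) : nat := Z.to_nat (Int_part y).

Lemma nfloor_spec (y : R) : 0 <= y -> INR (nfloor y) <= y < INR (nfloor y) + 1.
Proof.
  intros Hy. unfold nfloor. destruct (base_Int_part y) as [B1 B2].
  assert (Hz : (-1 < Int_part y)%Z) by (apply lt_IZR; lra).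
  rewrite INR_IZR_INZ, Znat.Z2Nat.id by lia. lra.
Qed.

Lemma nfloor_unique (k : nat) (y : R) : INR k <= y < INR k + 1 -> nfloor y = k.
Proof.
  intros Hk. unfold nfloor, Int_part.
  assert (Hup : up y = (Z.of_nat k + 1)%Z).
  { symmetry. apply tech_up; rewrite plus_IZR, <- INR_IZR_INZ; simpl; lra. }
  rewrite Hup. lia.
Qed.

Section Digits.
Variables (s p : nat) (A : list nat).
Hypothesis Hs : (2 <= s)%nat.
Local Open Scope nat_scope.

Lemma a_aux_fuel (f1 f2 n : nat) : n <= f1 -> n <= f2 -> a_aux s p A f1 n = a_aux s p A f2 n.
Proof.
  revert f2 n; induction f1 as [|f1 IH]; intros [|f2] n H1 H2;
    try (replace n with 0 by lia; reflexivity).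
  simpl. destruct (Nat.eqb_spec n 0) as [|Hn]; [reflexivity|].
  assert (n / s < n) by (apply Nat.div_lt; lia).
  rewrite (IH f2) by lia. reflexivity.
Qed.

Lemma aseq_rec (N : nat) : 1 <= N / s ->
  aseq s p A N = hdig A (N mod s) + p * aseq s p A (N / s).
Proof.
  intros HN.
  assert (HsN : s <= N) by (destruct (Nat.lt_ge_cases N s); [rewrite Nat.div_small in HN|]; lia).
  assert (Hlt : N / s < N) by (apply Nat.div_lt; lia).
  unfold aseq. destruct (Nat.eqb_spec N 0), (Nat.eqb_spec (N / s) 0); try lia.
  destruct N as [|N']; [lia|]. simpl a_aux at 1.
  rewrite (a_aux_fuel N' (S N' / s)) by lia. reflexivity.
Qed.

Lemma aseq_digit (k : nat) : 1 <= k < s -> aseq s p A k = hdig A k.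
Proof.
  intros Hk. unfold aseq. destruct (Nat.eqb_spec k 0); [lia|].
  destruct k as [|k']; [lia|]. simpl a_aux.
  rewrite Nat.mod_small, Nat.div_small by lia. destruct k'; simpl; lia.
Qed.

Hypothesis HAlen : length A = s.

Lemma hdig_lt (d : nat) : List.Forall (fun a => a < p) A -> d < s -> hdig A d < p.
Proof.
  intros HF Hd. rewrite Forall_forall in HF. apply HF, nth_In. lia.
Qed.

Lemma hdig_pos (d : nat) : Sorted Peano.lt A -> 1 <= d < s -> 1 <= hdig A d.
Proof.
  intros HS Hd. destruct A as [|a0 A']; [simpl in HAlen; lia|].
  apply Sorted_StronglySorted in HS; [|intros x y z Hxy Hyz; lia].
  apply StronglySorted_inv in HS as [_ HF]. rewrite Forall_forall in HF.
  destruct d as [|d']; [lia|]. unfold hdig; simpl.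
  assert (a0 < nth d' A' 0); [apply HF, nth_In; simpl in HAlen; lia|lia].
Qed.

Lemma aseq_block (m k N : nat) : List.Forall (fun a => a < p) A -> 1 <= k ->
  k * s ^ m <= N < (k + 1) * s ^ m ->
  p ^ m * aseq s p A k <= aseq s p A N < p ^ m * (aseq s p A k + 1).
Proof.
  intros HF Hk. revert N; induction m as [|m IH]; intros N HN.
  - simpl in *. replace N with k by lia. lia.
  - assert (Hq : k * s ^ m <= N / s < (k + 1) * s ^ m).
    { simpl in HN. split.
      - apply Nat.div_le_lower_bound; lia.
      - apply Nat.Div0.div_lt_upper_bound; lia. }
    assert (Hsm : 1 <= s ^ m) by (pose proof (Nat.pow_nonzero s m); lia).
    assert (Hd : hdig A (N mod s) < p)
      by (apply hdig_lt; [exact HF|apply Nat.mod_upper_bound; lia]).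
    specialize (IH _ Hq). rewrite (aseq_rec N) by nia. rewrite Nat.pow_succ_r'.
    set (d := hdig A (N mod s)) in *. set (q := aseq s p A (N / s)) in *.
    set (a := aseq s p A k) in *. set (P := p ^ m) in *. nia.
Qed.

End Digits.

Lemma Lim_seq_between (u : nat -> R) (n : nat) (lo hi : R) :
  (forall m, lo <= u (n + m)%nat <= hi) -> lo <= real (Lim_seq u) <= hi.
Proof.
  intros Hu.
  assert (Hev : forall P : R -> Prop,
    (forall y, lo <= y <= hi -> P y) -> eventually (fun j => P (u j))).
  { intros P HP. exists n. intros j Hj. apply HP. replace j with (n + (j - n))%nat by lia. apply Hu. }
  assert (Hlo := Lim_seq_le_loc (fun _ => lo) u (Hev _ (fun y Hy => proj1 Hy))).
  assert (Hhi := Lim_seq_le_loc u (fun _ => hi) (Hev _ (fun y Hy => proj2 Hy))).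
  rewrite Lim_seq_const in Hlo, Hhi.
  destruct (Lim_seq u); simpl in *; try contradiction; lra.
Qed.

Lemma geometric_small (C r eps : R) : 0 <= r < 1 -> 0 < eps ->
  exists j, (1 <= j)%nat /\ C * r ^ j < eps.
Proof.
  intros Hr Heps. destruct (Rle_or_lt C 0) as [HC|HC].
  - exists 1%nat. split; [lia|]. rewrite pow_1. nra.
  - assert (Hr1 : Rabs r < 1) by (rewrite Rabs_right; lra).
    destruct (pow_lt_1_zero r Hr1 (eps / C)) as [j0 Hj0]; [apply Rdiv_lt_0_compat; lra|].
    exists (S j0). split; [lia|]. specialize (Hj0 (S j0) ltac:(lia)).
    rewrite Rabs_right in Hj0 by (apply Rle_ge, pow_le; lra).
    apply (Rmult_lt_compat_l C) in Hj0; [|lra].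
    replace (C * (eps / C)) with eps in Hj0 by (field; lra). exact Hj0.
Qed.

Lemma Rpower_increment (a b c : R) : 1 <= c -> 0 < a <= b ->
  Rpower a (c - 1) * (b - a) <= Rpower b c - Rpower a c.
Proof.
  intros Hc Hab.
  assert (Hsplit : forall y, 0 < y -> Rpower y c = Rpower y (c - 1) * y).
  { intros y Hy. rewrite <- (Rpower_1 y) at 3 by exact Hy. rewrite <- Rpower_plus. f_equal; ring. }
  rewrite (Hsplit a), (Hsplit b) by lra.
  assert (Rpower a (c - 1) <= Rpower b (c - 1)) by (apply Rle_Rpower_l; lra).
  assert (0 < Rpower a (c - 1)) by apply exp_pos.
  nra.
Qed.

Section Exponent.
Variables (s p : nat).
Hypotheses (Hs : (2 <= s)%nat) (Hsp : (s < p)%nat).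

Let HS : 1 < INR s. Proof. apply lt_1_INR; lia. Qed.
Let HP : INR s < INR p. Proof. apply lt_INR; lia. Qed.

Lemma Rpower_logsp : Rpower (INR s) (logsp s p) = INR p.
Proof.
  unfold Rpower, logsp. assert (0 < ln (INR s)) by (rewrite <- ln_1; apply ln_increasing; lra).
  replace (ln (INR p) / ln (INR s) * ln (INR s)) with (ln (INR p)) by (field; lra).
  apply exp_ln; lra.
Qed.

Lemma logsp_ge_1 : 1 <= logsp s p.
Proof.
  unfold logsp. assert (0 < ln (INR s)) by (rewrite <- ln_1; apply ln_increasing; lra).
  assert (ln (INR s) < ln (INR p)) by (apply ln_increasing; lra).
  apply (Rmult_le_reg_r (ln (INR s))); [lra|]. field_simplify; lra.
Qed.

Lemma Rpower_logsp_scale (n : nat) (x : R) : 0 < x ->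
  Rpower (INR s ^ n * x) (logsp s p) = INR p ^ n * Rpower x (logsp s p).
Proof.
  intros Hx. rewrite <- Rpower_mult_distr by (try apply pow_lt; lra). f_equal.
  rewrite <- (Rpower_pow n (INR s)) by lra.
  rewrite Rpower_mult, Rmult_comm, <- Rpower_mult, Rpower_logsp. apply Rpower_pow; lra.
Qed.

Lemma Rpower_inv_logsp : Rpower (/ INR s) (logsp s p - 1) = INR s / INR p.
Proof.
  assert (Hs1 : Rpower (INR s) (logsp s p - 1) * INR s = INR p).
  { rewrite <- Rpower_logsp. pattern (INR s) at 2. rewrite <- (Rpower_1 (INR s)) by lra.
    rewrite <- Rpower_plus.
    f_equal. ring. }
  assert (Hinv : Rpower (/ INR s) (logsp s p - 1) * Rpower (INR s) (logsp s p - 1) = 1).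
  { rewrite Rpower_mult_distr by (try apply Rinv_0_lt_compat; lra).
    rewrite Rinv_l by lra. unfold Rpower. rewrite ln_1, Rmult_0_r. apply exp_0. }
  assert (Hq : 0 < Rpower (INR s) (logsp s p - 1)) by apply exp_pos.
  rewrite <- Hs1. apply (Rmult_eq_reg_r (Rpower (INR s) (logsp s p - 1))); [|lra].
  rewrite Hinv. field. lra.
Qed.

Lemma Rpower_logsp_growth (a b : R) : / INR s <= a <= b ->
  INR s / INR p * (b - a) <= Rpower b (logsp s p) - Rpower a (logsp s p).
Proof.
  intros Hab. assert (Hs0 : 0 < / INR s) by (apply Rinv_0_lt_compat; lra).
  eapply Rle_trans; [|apply Rpower_increment; [apply logsp_ge_1|lra]].
  apply Rmult_le_compat_r; [lra|]. rewrite <- Rpower_inv_logsp.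
  apply Rle_Rpower_l; [generalize logsp_ge_1|]; lra.
Qed.

End Exponent.

Lemma nfloor_scaled_block (s n m k : nat) (x : R) : (1 <= s)%nat ->
  INR k <= INR s ^ n * x < INR k + 1 ->
  (k * s ^ m <= nfloor (INR s ^ (n + m) * x) < (k + 1) * s ^ m)%nat.
Proof.
  intros Hs Hx. set (y := INR s ^ (n + m) * x).
  assert (Hsm : 0 < INR s ^ m) by (apply pow_lt, lt_0_INR; lia).
  assert (Hy : INR k * INR s ^ m <= y < (INR k + 1) * INR s ^ m).
  { unfold y. rewrite pow_add. nra. }
  destruct (nfloor_spec y) as [N1 N2]; [generalize (pos_INR k); nra|].
  rewrite <- pow_INR, <- S_INR, <- !mult_INR in Hy.
  split.
  - apply Nat.lt_succ_r, INR_lt. rewrite S_INR. lra.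
  - apply INR_lt. rewrite Nat.add_1_r. lra.
Qed.

Section Lambda.
Variables (s p : nat) (A : list nat).
Hypotheses (Hs : (2 <= s)%nat) (Hsp : (s < p)%nat) (HAlen : length A = s)
  (HAbound : List.Forall (fun a => (a < p)%nat) A).

Lemma lambda_cell_bound (n k : nat) (x : R) : (1 <= k)%nat ->
  INR k <= INR s ^ n * x < INR k + 1 ->
  INR (aseq s p A k) / INR p ^ n <= lambda s p A x * Rpower x (logsp s p) <=
  (INR (aseq s p A k) + 1) / INR p ^ n.
Proof.
  intros Hk Hx.
  assert (HP : 0 < INR p) by (apply lt_0_INR; lia).
  assert (Hx0 : 0 < x).
  { assert (1 <= INR k) by (apply (le_INR 1); lia).
    assert (0 < INR s ^ n) by (apply pow_lt, lt_0_INR; lia). nra. }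
  set (X := Rpower x (logsp s p)). assert (HX : 0 < X) by apply exp_pos.
  assert (HPn : 0 < INR p ^ n) by (apply pow_lt; lra).
  assert (Hlim := Lim_seq_between
    (fun j => areal s p A (INR s ^ j * x) / Rpower (INR s ^ j * x) (logsp s p)) n
    (INR (aseq s p A k) / (INR p ^ n * X)) ((INR (aseq s p A k) + 1) / (INR p ^ n * X))).
  destruct Hlim as [L1 L2].
  - intros m.
    destruct (nfloor_scaled_block s n m k x ltac:(lia) Hx) as [B1 B2].
    destruct (aseq_block s p A Hs HAlen m k _ HAbound Hk (conj B1 B2)) as [C1 C2].
    apply le_INR in C1. apply lt_INR in C2.
    rewrite mult_INR, pow_INR in C1, C2. rewrite plus_INR in C2. simpl INR in C2.
    unfold areal. fold (nfloor (INR s ^ (n + m) * x)).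
    rewrite Rpower_logsp_scale by (auto; lia). fold X.
    assert (HPm : 0 < INR p ^ m) by (apply pow_lt; lra).
    set (a := INR (aseq s p A k)) in *. rewrite (pow_add (INR p)).
    replace (a / (INR p ^ n * X)) with (INR p ^ m * a / (INR p ^ n * INR p ^ m * X)) by (field; lra).
    replace ((a + 1) / (INR p ^ n * X))
      with (INR p ^ m * (a + 1) / (INR p ^ n * INR p ^ m * X)) by (field; lra).
    assert (0 < / (INR p ^ n * INR p ^ m * X))
      by (apply Rinv_0_lt_compat; repeat apply Rmult_lt_0_compat; lra).
    unfold Rdiv. split; apply Rmult_le_compat_r; lra.
  - unfold lambda. set (l := real _) in *. set (a := INR (aseq s p A k)) in *.
    replace (a / INR p ^ n) with (a / (INR p ^ n * X) * X) by (field; lra).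
    replace ((a + 1) / INR p ^ n) with ((a + 1) / (INR p ^ n * X) * X) by (field; lra).
    split; apply Rmult_le_compat_r; lra.
Qed.

Lemma lambda_pos (x : R) : Sorted Peano.lt A -> / INR s <= x < 1 -> 0 < lambda s p A x.
Proof.
  intros HAsorted Hx.
  assert (HS : 1 < INR s) by (apply lt_1_INR; lia).
  assert (Hsx : 1 <= INR s ^ 1 * x < INR s).
  { rewrite pow_1. split; [|nra].
    destruct Hx as [Hx _]. apply (Rmult_le_compat_l (INR s)) in Hx; [|lra].
    rewrite Rinv_r in Hx; lra. }
  set (k := nfloor (INR s ^ 1 * x)).
  destruct (nfloor_spec (INR s ^ 1 * x)) as [K1 K2]; [lra|]. fold k in K1, K2.
  assert (Hk : (1 <= k < s)%nat).
  { split; [apply Nat.lt_succ_r, INR_lt|apply INR_lt]; rewrite ?S_INR; simpl; lra. }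
  destruct (lambda_cell_bound 1 k x ltac:(lia) ltac:(lra)) as [L _].
  rewrite aseq_digit in L by (auto; lia).
  assert (Hd : 1 <= INR (hdig A k)) by (apply (le_INR 1), (hdig_pos s); auto).
  assert (0 < INR (hdig A k) / INR p ^ 1)
    by (apply Rdiv_lt_0_compat; [lra|apply pow_lt, lt_0_INR; lia]).
  assert (HX : 0 < Rpower x (logsp s p)) by apply exp_pos.
  nra.
Qed.

End Lambda.

Section Approximation.
Variables (s p : nat) (A : list nat) (alpha : R).
Hypotheses (Hs : (2 <= s)%nat) (Hsp : (s < p)%nat) (Halpha : 0 < alpha).

Let HS : 1 < INR s. Proof. apply lt_1_INR; lia. Qed.
Let HP : INR s < INR p. Proof. apply lt_INR; lia. Qed.

(* On the level-[j] s-adic interval of [x], [lambda x * x ^ c] lies between [cell_lo j x]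
   and [cell_lo j x + / p ^ j]. *)
Definition cell_lo (j : nat) (x : R) : R := INR (aseq s p A (nfloor (INR s ^ j * x))) / INR p ^ j.

Definition gauge (x : R) : R := alpha * Rpower x (logsp s p).

Definition lower_approx (j : nat) (x : R) : R :=
  restrict_superlevel gauge (cell_lo j x + / INR p ^ j) Rinv x.

Definition upper_approx (j : nat) (x : R) : R := restrict_superlevel gauge (cell_lo j x) Rinv x.

Lemma approx_cell (j k : nat) : (1 <= j)%nat -> (s ^ (j - 1) <= k < s ^ j)%nat ->
  let u := INR k / INR s ^ j in let v := INR (S k) / INR s ^ j in
  ex_RInt (lower_approx j) u v /\ ex_RInt (upper_approx j) u v /\
  RInt (upper_approx j) u v - RInt (lower_approx j) u v <= INR p / (alpha * INR p ^ j).
Proof.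
  intros Hj Hk u v.
  assert (Hsj : 0 < INR s ^ j) by (apply pow_lt; lra).
  assert (HPj : 0 < INR p ^ j) by (apply pow_lt; lra).
  assert (Hu : / INR s <= u).
  { unfold u. apply (Rmult_le_reg_r (INR s ^ j)); [lra|].
    replace (INR k / INR s ^ j * INR s ^ j) with (INR k) by (field; lra).
    assert (Epow : INR s ^ j = INR s * INR s ^ (j - 1))
      by (replace j with (S (j - 1)) at 1 by lia; reflexivity).
    rewrite Epow. replace (/ INR s * (INR s * INR s ^ (j - 1))) with (INR s ^ (j - 1)) by (field; lra).
    rewrite <- pow_INR. apply le_INR. lia. }
  assert (Huv : u <= v)
    by (unfold u, v; rewrite S_INR; apply Rmult_le_compat_r; [left; apply Rinv_0_lt_compat|]; lra).
  assert (Hu0 : 0 < u) by (assert (0 < / INR s) by (apply Rinv_0_lt_compat; lra); lra).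
  assert (Hcell : forall x, Rmin u v < x < Rmax u v -> nfloor (INR s ^ j * x) = k).
  { intros x Hx. rewrite Rmin_left, Rmax_right in Hx by lra. apply nfloor_unique.
    unfold u, v in Hx. rewrite S_INR in Hx. destruct Hx as [Hx1 Hx2].
    apply (Rmult_lt_compat_l (INR s ^ j)) in Hx1, Hx2; [|lra|lra].
    replace (INR s ^ j * (INR k / INR s ^ j)) with (INR k) in Hx1 by (field; lra).
    replace (INR s ^ j * ((INR k + 1) / INR s ^ j)) with (INR k + 1) in Hx2 by (field; lra).
    lra. }
  set (lo := INR (aseq s p A k) / INR p ^ j).
  destruct (restrict_superlevel_gap gauge Rinv u v (alpha * (INR s / INR p)) (INR s)
    lo (lo + / INR p ^ j)) as [Iup [Ilow Hgap]]; try lra.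
  - apply Rmult_lt_0_compat; [lra|apply Rdiv_lt_0_compat; lra].
  - assert (0 < / INR p ^ j) by (apply Rinv_0_lt_compat; lra). lra.
  - intros x y Hxy Hy. unfold gauge. rewrite Rmult_assoc, <- Rmult_minus_distr_l.
    apply Rmult_le_compat_l; [lra|]. apply Rpower_logsp_growth; auto. lra.
  - apply (ex_RInt_continuous (V := R_CompleteNormedModule)). intros x Hx.
    rewrite Rmin_left, Rmax_right in Hx by lra. apply continuous_Rinv. lra.
  - intros x Hx. rewrite <- (Rinv_inv (INR s)). apply Rinv_le_contravar; [|lra].
    apply Rinv_0_lt_compat; lra.
  - assert (Elow : forall x, Rmin u v < x < Rmax u v ->
      restrict_superlevel gauge (lo + / INR p ^ j) Rinv x = lower_approx j x).
    { intros x Hx. unfold lower_approx, cell_lo. rewrite Hcell by exact Hx. reflexivity. }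
    assert (Eup : forall x, Rmin u v < x < Rmax u v ->
      restrict_superlevel gauge lo Rinv x = upper_approx j x).
    { intros x Hx. unfold upper_approx, cell_lo. rewrite Hcell by exact Hx. reflexivity. }
    split; [apply (ex_RInt_ext _ _ _ _ Elow Ilow)|split; [apply (ex_RInt_ext _ _ _ _ Eup Iup)|]].
    rewrite <- (RInt_ext _ _ _ _ Elow), <- (RInt_ext _ _ _ _ Eup).
    eapply Rle_trans; [exact Hgap|]. right. field. lra.
Qed.

Lemma approx_gap (j : nat) : (1 <= j)%nat ->
  ex_RInt (lower_approx j) (/ INR s) 1 /\ ex_RInt (upper_approx j) (/ INR s) 1 /\
  RInt (upper_approx j) (/ INR s) 1 - RInt (lower_approx j) (/ INR s) 1 <=
  INR p / alpha * (INR s / INR p) ^ j.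
Proof.
  intros Hj.
  set (k0 := (s ^ (j - 1))%nat). set (N := (s ^ j - k0)%nat).
  assert (Hk0 : (k0 <= s ^ j)%nat) by (apply Nat.pow_le_mono_r; lia).
  set (x i := INR (k0 + i) / INR s ^ j).
  assert (Hsj : INR s ^ j <> 0) by (apply pow_nonzero; lra).
  assert (E0 : x 0%nat = / INR s).
  { unfold x, k0. rewrite Nat.add_0_r, pow_INR.
    replace j with (S (j - 1)) at 2 by lia. simpl. field. split; [|apply pow_nonzero]; lra. }
  assert (EN : x N = 1).
  { unfold x, N. replace (k0 + (s ^ j - k0))%nat with (s ^ j)%nat by lia.
    rewrite pow_INR. field. exact Hsj. }
  assert (Hcells : forall i, (i < N)%nat ->
    ex_RInt (lower_approx j) (x i) (x (S i)) /\ ex_RInt (upper_approx j) (x i) (x (S i)) /\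
    RInt (upper_approx j) (x i) (x (S i)) - RInt (lower_approx j) (x i) (x (S i)) <=
    INR p / (alpha * INR p ^ j)).
  { intros i Hi. unfold x. rewrite Nat.add_succ_r.
    apply approx_cell; [exact Hj|]. unfold N, k0 in *; lia. }
  rewrite <- E0, <- EN.
  split; [apply ex_RInt_grid; apply Hcells|split; [apply ex_RInt_grid; apply Hcells|]].
  assert (Hdiff : RInt (fun y => minus (upper_approx j y) (lower_approx j y)) (x 0%nat) (x N) <=
                  INR N * (INR p / (alpha * INR p ^ j))).
  { apply RInt_grid_le. intros i Hi. destruct (Hcells i Hi) as [Il [Iu Hgap]].
    split; [apply (ex_RInt_minus (V := R_NormedModule)); auto|].
    rewrite (RInt_minus (V := R_CompleteNormedModule)) by auto. exact Hgap. }
  rewrite (RInt_minus (V := R_CompleteNormedModule)) in Hdiff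
    by (apply ex_RInt_grid; apply Hcells).
  eapply Rle_trans; [exact Hdiff|].
  assert (HN : INR N <= INR s ^ j) by (rewrite <- pow_INR; apply le_INR; unfold N; lia).
  assert (HPj : 0 < INR p ^ j) by (apply pow_lt; lra).
  replace (INR p / alpha * (INR s / INR p) ^ j) with (INR s ^ j * (INR p / (alpha * INR p ^ j)))
    by (unfold Rdiv; rewrite Rpow_mult_distr, pow_inv; field; lra).
  apply Rmult_le_compat_r; [|exact HN].
  apply Rlt_le, Rdiv_lt_0_compat; [|apply Rmult_lt_0_compat]; lra.
Qed.

Hypotheses (HAlen : length A = s) (HAbound : List.Forall (fun a => (a < p)%nat) A).

Lemma approx_sandwich (j : nat) (x : R) : (1 <= j)%nat -> / INR s <= x < 1 ->
  lower_approx j x <= indic_over_x s p A alpha x <= upper_approx j x.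
Proof.
  intros Hj Hx.
  assert (Hx0 : 0 < x) by (assert (0 < / INR s) by (apply Rinv_0_lt_compat; lra); lra).
  assert (Hsj : 1 <= INR s ^ j * x).
  { replace j with (S (j - 1)) by lia. rewrite <- tech_pow_Rmult.
    assert (1 <= INR s ^ (j - 1)) by (apply pow_R1_Rle; lra).
    assert (1 <= INR s * x); [|nra].
    destruct Hx as [Hx _]. apply (Rmult_le_compat_l (INR s)) in Hx; [|lra].
    rewrite Rinv_r in Hx; lra. }
  set (k := nfloor (INR s ^ j * x)).
  destruct (nfloor_spec (INR s ^ j * x)) as [K1 K2]; [lra|]. fold k in K1, K2.
  assert (Hk : (1 <= k)%nat) by (apply (INR_lt 0); simpl; lra).
  destruct (lambda_cell_bound s p A Hs Hsp HAlen HAbound j k x Hk (conj K1 K2)) as [L U].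
  assert (HX : 0 < Rpower x (logsp s p)) by apply exp_pos.
  assert (Hix : 0 < / x) by (apply Rinv_0_lt_compat; lra).
  unfold lower_approx, upper_approx, restrict_superlevel, indic_over_x, E_alpha, gauge, cell_lo.
  fold k. set (lam := lambda s p A x) in *. set (X := Rpower x (logsp s p)) in *.
  repeat destruct excluded_middle_informative; try lra.
  - exfalso. apply n; split; [lra|nra].
  - exfalso. apply n; nra.
Qed.

Lemma ex_RInt_indic_over_x_pos : ex_RInt (indic_over_x s p A alpha) (/ INR s) 1.
Proof.
  assert (HSi : / INR s < 1) by (rewrite <- Rinv_1; apply Rinv_lt_contravar; lra).
  apply ex_RInt_squeeze; [lra|]. intros eps Heps.
  destruct (geometric_small (INR p / alpha) (INR s / INR p) eps) as [j [Hj Hsmall]]; [|exact Heps|].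
  { split; [apply Rlt_le, Rdiv_lt_0_compat|apply Rlt_div_l]; lra. }
  destruct (approx_gap j Hj) as [Il [Iu Hgap]].
  exists (lower_approx j), (upper_approx j). split; [exact Il|split; [exact Iu|split]].
  - intros x Hx. apply approx_sandwich; [exact Hj|lra].
  - lra.
Qed.

End Approximation.

Theorem mainTheorem14 (p s : nat) (A : list nat)
  (Hp : (3 <= p)%nat) (Hs2 : (2 <= s)%nat) (Hsp : (s < p)%nat)
  (HAsorted : Sorted Peano.lt A) (HAlen : List.length A = s)
  (HAbound : List.Forall (fun a => (a < p)%nat) A)
  (alpha : R)
  (Halpha : Rbar_le (mInf s p A) (Finite alpha) /\ Rbar_le (Finite alpha) (MSup s p A)) :
  ex_RInt (indic_over_x s p A alpha) (/ INR s) 1.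
Proof.
  (* The argument works for every real [alpha]. *)
  destruct (Rle_or_lt alpha 0) as [Hneg|Hpos]; [|exact (ex_RInt_indic_over_x_pos s p A alpha
    Hs2 Hsp Hpos HAlen HAbound)].
  (* [lambda] is positive on [[/ s, 1)], so [E_alpha] is empty. *)
  apply (ex_RInt_ext (fun _ => 0)); [|apply ex_RInt_const].
  intros x Hx. unfold indic_over_x. destruct excluded_middle_informative as [[HE Hlam]|]; [|reflexivity].
  assert (0 < lambda s p A x) by (apply (lambda_pos s p A); auto). lra.
Qed.
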